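(* Let $p\ge 3$ be an odd integer, $\mu\ge 0$ and $\alpha>0$. Then for any initial data $(x_0,x_1)\in\mathbb{R}^2$ there exists a unique global solution $x\in C^2([0,\infty))$ of the initial value problem \[ x''(t)+\mu x'(t)+\alpha x(t)^p=0,\quad t>0,\qquad x(0)=x_0,\ x'(0)=x_1. \] Moreover, if $\mu>0$, there exists a constant $C_*>0$ such that this solution satisfies \[ |x(t)|\le C_*\, t^{-\frac{1}{p-1}}\quad\text{for all } t>0. \] *)

From Stdlib Require Import Reals Lra Lia Arith.
Open Scope R_scope.

Definition deriv_nonneg (f f' : R -> R) : Prop :=
  forall t, 0 <= t -> forall eps, 0 < eps -> exists delta, 0 < delta /\
    forall s, 0 <= s -> s <> t -> Rabs (s - t) < delta ->
      Rabs ((f s - f t) / (s - t) - f' t) < eps.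

Definition cont_nonneg (g : R -> R) : Prop :=
  forall t, 0 <= t -> forall eps, 0 < eps -> exists delta, 0 < delta /\
    forall s, 0 <= s -> Rabs (s - t) < delta -> Rabs (g s - g t) < eps.

Definition is_solution (p : nat) (mu alpha x0 x1 : R) (x : R -> R) : Prop :=
  exists dx ddx : R -> R,
    deriv_nonneg x dx /\ deriv_nonneg dx ddx /\ cont_nonneg ddx /\
    (forall t, 0 < t -> ddx t + mu * dx t + alpha * (x t) ^ p = 0) /\
    x 0 = x0 /\ dx 0 = x1.

(* Truncate the system x' = v, v' = - mu v - a x ^ p outside a ball, so that it becomes bounded
   and globally Lipschitz, and solve it by Picard iteration.  Since p is odd and mu >= 0, the
   energy v ^ 2 / 2 + a x ^ (p + 1) / (p + 1) does not increase, so the solution never reaches the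
   truncation and solves the original system.  The energy bound makes x ^ p Lipschitz along any
   two solutions, whence uniqueness by Gronwall.  For mu > 0 the modified energy
   H = v ^ 2 / 2 + (v + mu x) ^ 2 / 2 + 2 a x ^ (p + 1) / (p + 1) satisfies
   H' = - mu (v ^ 2 + a x ^ (p + 1)) <= - c H ^ ((p + 1) / 2) on the bounded orbit, so
   H (t) = O (t ^ (- 2 / (p - 1))), and x ^ 2 <= 4 H / mu ^ 2 gives the decay of x. *)

From Stdlib Require Import Reals Lra Lia Arith.
From Coquelicot Require Import Coquelicot.
Open Scope R_scope.

(** * Calculus on the real line *)

Lemma continuity_pt_of_is_derive (f : R -> R) x l : is_derive f x l -> continuity_pt f x.
Proof.
  intros H. apply continuity_pt_filterlim.
  apply (ex_derive_continuous (K := R_AbsRing) (V := R_NormedModule)). now exists l.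
Qed.

Lemma Derive_eta (f : R -> R) x l : is_derive f x l -> Derive (fun y => f y) x = l.
Proof. apply is_derive_unique. Qed.

Lemma exp_le_compat x y : x <= y -> exp x <= exp y.
Proof.
  intros H. destruct (Req_dec x y) as [->|Hne]; [lra|].
  apply Rlt_le, exp_increasing. lra.
Qed.

Lemma continuity_pt_pow_fun (f : R -> R) n x :
  continuity_pt f x -> continuity_pt (fun y => f y ^ n) x.
Proof.
  intros H. induction n as [|n IH]; simpl.
  - now apply continuity_pt_const.
  - exact (continuity_pt_mult f (fun y => f y ^ n) x H IH).
Qed.

Lemma continuity_pt_eps (g : R -> R) s eps : continuity_pt g s -> 0 < eps ->
  exists d, 0 < d /\ forall r, Rabs (r - s) < d -> Rabs (g r - g s) < eps.
Proof.
  intros Hc He. destruct (Hc eps He) as [d [Hd Hr]]. exists d. split; [exact Hd|].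
  intros r Hrs. destruct (Req_dec r s) as [->|Hne].
  - now rewrite Rminus_diag, Rabs_R0.
  - apply (Hr r). split; [split; [exact I|auto]|exact Hrs].
Qed.

Lemma continuity_pt_of_lipschitz (f : R -> R) C t :
  (forall s, Rabs (f s - f t) <= C * Rabs (s - t)) -> continuity_pt f t.
Proof.
  intros H eps Heps.
  assert (HC : 0 <= Rabs C) by apply Rabs_pos.
  exists (eps / (Rabs C + 1)); split; [apply Rdiv_lt_0_compat; lra|].
  intros s [_ Hs]; simpl in *; unfold R_dist in *.
  assert (Hd : Rabs C * Rabs (s - t) <= Rabs C * (eps / (Rabs C + 1)))
    by (apply Rmult_le_compat_l; lra).
  assert (Hq : Rabs C * (eps / (Rabs C + 1)) < eps).
  { apply (Rmult_lt_reg_r (Rabs C + 1)); [lra|].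
    replace (Rabs C * (eps / (Rabs C + 1)) * (Rabs C + 1)) with (Rabs C * eps) by (field; lra).
    nra. }
  pose proof (Rle_abs C). pose proof (Rabs_pos (s - t)).
  specialize (H s). nra.
Qed.

Lemma continuity_pt_lipschitz2 (H : R -> R -> R) L (X V : R -> R) t :
  (forall x v x' v', Rabs (H x v - H x' v') <= L * (Rabs (x - x') + Rabs (v - v'))) ->
  continuity_pt X t -> continuity_pt V t -> continuity_pt (fun s => H (X s) (V s)) t.
Proof.
  intros HL HX HV eps Heps.
  assert (HC : 0 < 2 * (Rabs L + 1)) by (pose proof (Rabs_pos L); lra).
  set (e := eps / (2 * (Rabs L + 1))).
  assert (He : 0 < e) by (apply Rdiv_lt_0_compat; lra).
  destruct (HX e He) as [dX [HdX HX']]. destruct (HV e He) as [dV [HdV HV']].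
  exists (Rmin dX dV); split; [now apply Rmin_pos|].
  intros s [Hs Hst]. simpl in *; unfold R_dist in *.
  pose proof (Rmin_l dX dV). pose proof (Rmin_r dX dV).
  assert (Ex : Rabs (X s - X t) < e) by (apply HX'; split; [exact Hs|lra]).
  assert (Ev : Rabs (V s - V t) < e) by (apply HV'; split; [exact Hs|lra]).
  eapply Rle_lt_trans; [apply HL|].
  pose proof (Rabs_pos (X s - X t)). pose proof (Rabs_pos (V s - V t)).
  apply (Rle_lt_trans _ ((Rabs L + 1) * (Rabs (X s - X t) + Rabs (V s - V t)))).
  - pose proof (Rle_abs L). nra.
  - replace eps with ((Rabs L + 1) * (2 * e)) by (unfold e; field; pose proof (Rabs_pos L); lra).
    apply Rmult_lt_compat_l; [pose proof (Rabs_pos L); lra|lra].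
Qed.

Lemma nondecreasing_of_derive_nonneg (h h' : R -> R) a b : a <= b ->
  (forall s, a < s < b -> is_derive h s (h' s)) ->
  (forall s, a <= s <= b -> continuity_pt h s) ->
  (forall s, a < s < b -> 0 <= h' s) -> h a <= h b.
Proof.
  intros Hab Hd Hc Hp.
  destruct (Req_dec a b) as [->|Hne]; [lra|].
  set (pr1 := fun c (P : a < c < b) => exist (fun l => derivable_pt_abs h c l) (h' c)
          (proj1 (is_derive_Reals _ _ _) (Hd c P))).
  set (pr2 := fun c (P : a < c < b) => exist (fun l => derivable_pt_abs id c l) 1
          (derivable_pt_lim_id c)).
  destruct (MVT h id a b pr1 pr2 ltac:(lra) Hc) as [c [P HP]].
  { intros c _. apply continuity_pt_id. }
  simpl in HP; unfold id in HP.
  specialize (Hp c P). nra.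
Qed.

Lemma nonincreasing_of_derive_nonpos (h h' : R -> R) a b : a <= b ->
  (forall s, a < s < b -> is_derive h s (h' s)) ->
  (forall s, a <= s <= b -> continuity_pt h s) ->
  (forall s, a < s < b -> h' s <= 0) -> h b <= h a.
Proof.
  intros Hab Hd Hc Hn.
  enough (- h a <= - h b) by lra.
  apply (nondecreasing_of_derive_nonneg (fun s => - h s) (fun s => - h' s) a b Hab).
  - intros s Hs. exact (is_derive_opp h s (h' s) (Hd s Hs)).
  - intros s Hs. exact (continuity_pt_opp h s (Hc s Hs)).
  - intros s Hs. specialize (Hn s Hs). lra.
Qed.

Lemma Rabs_le_of_derive_le (f f' g g' : R -> R) t : 0 <= t ->
  (forall s, is_derive f s (f' s)) -> (forall s, is_derive g s (g' s)) ->
  (forall s, 0 <= s <= t -> Rabs (f' s) <= g' s) -> f 0 = 0 -> g 0 = 0 ->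
  Rabs (f t) <= g t.
Proof.
  intros Ht Hf Hg Hb Hf0 Hg0.
  assert (Hfc : forall s, continuity_pt f s)
    by (intros s; exact (continuity_pt_of_is_derive _ _ _ (Hf s))).
  assert (Hgc : forall s, continuity_pt g s)
    by (intros s; exact (continuity_pt_of_is_derive _ _ _ (Hg s))).
  assert (Hminus : g 0 - f 0 <= g t - f t).
  { apply (nondecreasing_of_derive_nonneg (fun s => g s - f s) (fun s => g' s - f' s) 0 t Ht).
    - intros s _. now apply (is_derive_minus g f).
    - intros s _. now apply continuity_pt_minus.
    - intros s Hs. specialize (Hb s ltac:(lra)). apply Rabs_le_between in Hb. lra. }
  assert (Hplus : g 0 + f 0 <= g t + f t).
  { apply (nondecreasing_of_derive_nonneg (fun s => g s + f s) (fun s => g' s + f' s) 0 t Ht).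
    - intros s _. now apply (is_derive_plus g f).
    - intros s _. now apply continuity_pt_plus.
    - intros s Hs. specialize (Hb s ltac:(lra)). apply Rabs_le_between in Hb. lra. }
  apply Rabs_le. lra.
Qed.

Lemma Rabs_le_of_derive_le_exp (f f' : R -> R) C K t : 0 < K -> 0 <= t ->
  (forall s, is_derive f s (f' s)) -> f 0 = 0 ->
  (forall s, 0 <= s <= t -> Rabs (f' s) <= C * exp (K * s)) ->
  Rabs (f t) <= C * exp (K * t) / K.
Proof.
  intros HK Ht Hf Hf0 Hb.
  assert (HC : 0 <= C).
  { specialize (Hb 0 ltac:(lra)). rewrite Rmult_0_r, exp_0 in Hb.
    pose proof (Rabs_pos (f' 0)). lra. }
  apply (Rle_trans _ (C * (exp (K * t) - 1) / K)).
  - apply (Rabs_le_of_derive_le f f' (fun s => C * (exp (K * s) - 1) / K)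
             (fun s => C * exp (K * s)) t Ht Hf); auto.
    + intros s. auto_derive; auto. field. lra.
    + rewrite Rmult_0_r, exp_0. field. lra.
  - unfold Rdiv. apply Rmult_le_compat_r; [apply Rlt_le, Rinv_0_lt_compat; lra|]. nra.
Qed.

Lemma Rabs_sub_le_of_derive_bound (f f' : R -> R) C t s :
  (forall x, is_derive f x (f' x)) -> (forall x, Rabs (f' x) <= C) ->
  Rabs (f t - f s) <= C * Rabs (t - s).
Proof.
  intros Hd Hb.
  destruct (MVT_gen f s t f') as [c [_ Hc]].
  - intros; auto.
  - intros x _. exact (continuity_pt_of_is_derive f x _ (Hd x)).
  - rewrite Hc, Rabs_mult. apply Rmult_le_compat_r; [apply Rabs_pos|auto].
Qed.

Lemma continuous_induction (g : R -> R) K M : K < M ->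
  (forall s, 0 <= s -> continuity_pt g s) -> g 0 <= K ->
  (forall t, 0 <= t -> (forall s, 0 <= s <= t -> g s <= M) -> g t <= K) ->
  forall t, 0 <= t -> g t <= K.
Proof.
  intros HKM Hc H0 Hstep.
  enough (Hall : forall t, 0 <= t -> g t <= M).
  { intros t Ht. apply Hstep; auto. intros s Hs. apply Hall. lra. }
  intros t1 Ht1. destruct (Rle_dec (g t1) M) as [|Hgt]; [assumption|exfalso].
  (* [g <= M] holds up to [ss := sup E] by continuity, the step improves it to [K] at [ss],
     and continuity again carries [g <= M] a little beyond [ss]. *)
  set (E := fun s => 0 <= s <= t1 /\ forall r, 0 <= r <= s -> g r <= M).
  assert (HE0 : E 0) by (split; [lra|]; intros r Hr; replace r with 0 by lra; lra).
  destruct (completeness E) as [ss [Hub Hlub]].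
  { exists t1. intros s [Hs _]. lra. }
  { now exists 0. }
  assert (Hss : 0 <= ss <= t1) by (split; [now apply Hub|apply Hlub; intros s [Hs _]; lra]).
  assert (Hbelow : forall r, 0 <= r < ss -> g r <= M).
  { intros r Hr. destruct (Rle_dec (g r) M) as [|Hn]; [assumption|exfalso].
    enough (ss <= r) by lra. apply Hlub. intros s [Hs Hs2].
    destruct (Rle_dec s r) as [|Hsr]; [assumption|]. exfalso. apply Hn, Hs2. lra. }
  assert (Hss_M : g ss <= M).
  { destruct (Rle_dec (g ss) M) as [|Hn]; [assumption|exfalso].
    destruct (Req_dec ss 0) as [Hz|Hz]; [rewrite Hz in Hn; lra|].
    destruct (continuity_pt_eps g ss (g ss - M) (Hc ss (proj1 Hss)) ltac:(lra)) as [d [Hd Hg]].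
    set (r := Rmax 0 (ss - d / 2)).
    assert (Hr : 0 <= r < ss /\ Rabs (r - ss) < d).
    { unfold r, Rmax.
      destruct Rle_dec; repeat split; try lra; unfold Rabs; destruct Rcase_abs; lra. }
    specialize (Hg r (proj2 Hr)). specialize (Hbelow r (proj1 Hr)).
    apply Rabs_def2 in Hg. lra. }
  assert (Hss_K : g ss <= K).
  { apply Hstep; [apply Hss|]. intros s Hs.
    destruct (Req_dec s ss) as [->|]; [assumption|]. apply Hbelow. lra. }
  assert (Hlt : ss < t1) by (destruct (Req_dec ss t1) as [<-|]; lra).
  destruct (continuity_pt_eps g ss (M - K) (Hc ss (proj1 Hss)) ltac:(lra)) as [d [Hd Hg]].
  set (s' := Rmin t1 (ss + d / 2)).
  assert (Es : E s').
  { split; [unfold s', Rmin; destruct Rle_dec; lra|].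
    intros r Hr. destruct (Rlt_dec r ss) as [Hrs|Hrs]; [apply Hbelow; lra|].
    assert (Hrd : Rabs (r - ss) < d)
      by (unfold s', Rmin in Hr; destruct Rle_dec; unfold Rabs; destruct Rcase_abs; lra).
    specialize (Hg r Hrd). apply Rabs_def2 in Hg. lra. }
  specialize (Hub s' Es). unfold s', Rmin in Hub. destruct Rle_dec; lra.
Qed.

Lemma inv_pow_growth (h q : R -> R) k c t : (1 <= k)%nat -> 0 <= t ->
  (forall s, 0 < s < t -> is_derive h s (- q s)) ->
  (forall s, 0 <= s <= t -> continuity_pt h s) ->
  (forall s, 0 <= s <= t -> 0 < h s) ->
  (forall s, 0 < s < t -> c * h s ^ (k + 1) <= INR k * q s) ->
  c * t <= / h t ^ k - / h 0 ^ k.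
Proof.
  intros Hk1 Ht Hd Hc Hpos Hq.
  enough (/ h 0 ^ k - c * 0 <= / h t ^ k - c * t) by lra.
  apply (nondecreasing_of_derive_nonneg (fun s => / h s ^ k - c * s)
    (fun s => - (INR k * - q s * h s ^ pred k) / (h s ^ k) ^ 2 - c) 0 t Ht).
  - intros s Hs.
    assert (Hk : h s ^ k <> 0) by (apply pow_nonzero; specialize (Hpos s ltac:(lra)); lra).
    pose proof (Hd s Hs) as D. auto_derive.
    + repeat split; [eexists; eauto|exact Hk].
    + rewrite (Derive_eta h s _ D). field. exact Hk.
  - intros s Hs. apply continuity_pt_minus.
    + apply continuity_pt_inv; [apply continuity_pt_pow_fun, Hc, Hs|].
      apply pow_nonzero. specialize (Hpos s Hs). lra.
    + apply continuity_pt_scal, continuity_pt_id.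
  - intros s Hs. specialize (Hpos s ltac:(lra)). specialize (Hq s Hs).
    assert (Hpk : 0 < h s ^ pred k) by (apply pow_lt; lra).
    assert (Hhk : 0 < h s ^ (k + 1)) by (apply pow_lt; lra).
    assert (E : (h s ^ k) ^ 2 = h s ^ pred k * h s ^ (k + 1)).
    { rewrite <- !pow_add, <- pow_mult. f_equal. lia. }
    rewrite E.
    replace (- (INR k * - q s * h s ^ pred k) / (h s ^ pred k * h s ^ (k + 1)) - c)
      with ((INR k * q s - c * h s ^ (k + 1)) / h s ^ (k + 1)) by (field; lra).
    apply Rdiv_le_0_compat; lra.
Qed.

(** * Inequalities for powers *)

Lemma Rabs_pow_sub_le u w M n : Rabs u <= M -> Rabs w <= M ->
  Rabs (u ^ n - w ^ n) <= INR n * M ^ pred n * Rabs (u - w).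
Proof.
  intros Hu Hw. assert (HM : 0 <= M) by (pose proof (Rabs_pos u); lra).
  induction n as [|n IH].
  - simpl. rewrite Rminus_diag, Rabs_R0. lra.
  - replace (u ^ S n - w ^ S n) with (u * (u ^ n - w ^ n) + w ^ n * (u - w)) by (simpl; ring).
    eapply Rle_trans; [apply Rabs_triang|]. rewrite !Rabs_mult, <- RPow_abs.
    assert (A : Rabs u * Rabs (u ^ n - w ^ n) <= M * (INR n * M ^ pred n * Rabs (u - w)))
      by (apply Rmult_le_compat; auto; apply Rabs_pos).
    assert (B : Rabs w ^ n * Rabs (u - w) <= M ^ n * Rabs (u - w)).
    { apply Rmult_le_compat_r; [apply Rabs_pos|]. apply pow_incr. split; [apply Rabs_pos|auto]. }
    rewrite S_INR. destruct n as [|n]; simpl in *; [lra|].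
    replace (M * (INR (S n) * M ^ n * Rabs (u - w))) with (INR (S n) * (M * M ^ n) * Rabs (u - w))
      in A by ring.
    lra.
Qed.

Lemma pow_succ_odd_nonneg p x : Nat.Odd p -> 0 <= x ^ (p + 1).
Proof.
  intros [k ->]. replace (2 * k + 1 + 1)%nat with (2 * (k + 1))%nat by lia.
  rewrite pow_mult. apply pow_le, pow2_ge_0.
Qed.

Lemma pow_add_le_2pow u w n : 0 <= u -> 0 <= w -> (u + w) ^ n <= 2 ^ n * (u ^ n + w ^ n).
Proof.
  intros Hu Hw.
  assert (Hmax : u + w <= 2 * Rmax u w) by (unfold Rmax; destruct Rle_dec; lra).
  eapply Rle_trans; [apply pow_incr; split; [lra|exact Hmax]|].
  rewrite Rpow_mult_distr. apply Rmult_le_compat_l; [apply pow_le; lra|].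
  pose proof (pow_le u n Hu). pose proof (pow_le w n Hw).
  unfold Rmax; destruct Rle_dec; lra.
Qed.

Lemma pow_succ_le_scaled z c k : 0 <= z <= c -> z ^ (k + 1) <= c ^ k * z.
Proof.
  intros Hz. rewrite pow_add, pow_1. apply Rmult_le_compat_r; [lra|]. apply pow_incr. lra.
Qed.

Lemma sq_le_of_Rabs_le x R : Rabs x <= R -> 0 <= x ^ 2 <= R ^ 2.
Proof.
  intros Hx. split; [apply pow2_ge_0|].
  rewrite <- (pow2_abs x). apply pow_incr. split; [apply Rabs_pos|exact Hx].
Qed.

Lemma Rabs_le_Rpower_of_pow_le (y D t : R) k : (1 <= k)%nat -> 0 < D -> 0 < t ->
  (y ^ 2) ^ k <= D / t ->
  Rabs y <= Rpower D (1 / (2 * INR k)) * Rpower t (- (1 / (2 * INR k))).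
Proof.
  intros Hk HD Ht H.
  set (e := 1 / (2 * INR k)).
  assert (HkR : 1 <= INR k) by (apply (le_INR 1); exact Hk).
  assert (He : 0 < e) by (unfold e; apply Rdiv_lt_0_compat; lra).
  replace (Rpower D e * Rpower t (- e)) with (Rpower (D / t) e).
  2: { unfold Rpower. rewrite <- exp_plus. f_equal. unfold Rdiv.
       rewrite ln_mult, ln_Rinv by (try apply Rinv_0_lt_compat; auto). ring. }
  destruct (Req_dec y 0) as [->|Hy].
  - rewrite Rabs_R0. apply Rlt_le, exp_pos.
  - assert (Hay : 0 < Rabs y) by (apply Rabs_pos_lt; auto).
    replace (Rabs y) with (Rpower ((y ^ 2) ^ k) e).
    2: { rewrite <- pow2_abs, <- pow_mult. unfold Rpower. rewrite ln_pow by exact Hay.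
         rewrite <- (exp_ln (Rabs y)) at 2 by exact Hay. f_equal.
         unfold e. rewrite mult_INR. simpl INR. field. lra. }
    apply Rle_Rpower_l; [lra|]. split; [|exact H].
    apply pow_lt. rewrite <- pow2_abs. now apply pow_lt.
Qed.

(** * Picard iteration for a bounded Lipschitz planar system *)

Definition prim (c : R) (f : R -> R) (t : R) := c + RInt f 0 t.

Lemma is_derive_prim c (f : R -> R) t : (forall x, continuity_pt f x) ->
  is_derive (prim c f) t (f t).
Proof.
  intros Hc. unfold prim.
  assert (HI : is_derive (fun t => RInt f 0 t) t (f t)).
  { apply (is_derive_RInt f (fun t => RInt f 0 t) 0 t).
    - apply filter_forall. intros b. apply (RInt_correct (V := R_CompleteNormedModule)).
      apply (ex_RInt_continuous (V := R_CompleteNormedModule)).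
      intros z _. apply continuity_pt_filterlim, Hc.
    - apply continuity_pt_filterlim, Hc. }
  apply is_derive_Reals in HI. apply is_derive_Reals.
  replace (f t) with (0 + f t) by ring.
  apply (derivable_pt_lim_plus (fun _ => c) (fun t => RInt f 0 t)); auto.
  apply derivable_pt_lim_const.
Qed.

Lemma prim_0 c f : prim c f 0 = c.
Proof. unfold prim. rewrite RInt_point. unfold zero; simpl. ring. Qed.

Lemma Rabs_prim_sub_le c (f g : R -> R) t D : 0 <= t ->
  (forall x, continuity_pt f x) -> (forall x, continuity_pt g x) ->
  (forall s, 0 <= s <= t -> Rabs (f s - g s) <= D) ->
  Rabs (prim c f t - prim c g t) <= t * D.
Proof.
  intros Ht Hf Hg HD.
  assert (Hex : forall h : R -> R, (forall x, continuity_pt h x) -> ex_RInt h 0 t).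
  { intros h Hh. apply (ex_RInt_continuous (V := R_CompleteNormedModule)).
    intros z _. apply continuity_pt_filterlim, Hh. }
  unfold prim.
  replace (c + RInt f 0 t - (c + RInt g 0 t)) with (RInt f 0 t - RInt g 0 t) by ring.
  assert (E : RInt (fun x => f x - g x) 0 t = RInt f 0 t - RInt g 0 t)
    by exact (RInt_minus (V := R_CompleteNormedModule) f g 0 t (Hex f Hf) (Hex g Hg)).
  rewrite <- E.
  replace t with (t - 0) at 2 by ring.
  apply abs_RInt_le_const; auto.
  apply Hex. intros x. now apply continuity_pt_minus.
Qed.

Lemma geometric_lt C eps : 0 < eps -> exists N, C * (/ 2) ^ N < eps.
Proof.
  intros He. destruct (Rle_dec C 0) as [HC|HC].
  - exists 0%nat. simpl. lra.
  - destruct (pow_lt_1_zero (/ 2) ltac:(rewrite Rabs_right; lra) (eps / C)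
                ltac:(apply Rdiv_lt_0_compat; lra)) as [N HN].
    exists N. specialize (HN N (le_n N)).
    rewrite Rabs_right in HN by (apply Rle_ge, pow_le; lra).
    apply (Rmult_lt_compat_l C) in HN; [|lra].
    replace (C * (eps / C)) with eps in HN by (field; lra). exact HN.
Qed.

Lemma le_of_le_add_geometric a b C : (forall n, a <= b + C * (/ 2) ^ n) -> a <= b.
Proof.
  intros H. destruct (Rle_dec a b) as [|Hab]; [assumption|exfalso].
  destruct (geometric_lt C (a - b) ltac:(lra)) as [N HN]. specialize (H N). lra.
Qed.

Lemma Rabs_sub_le_geometric (u : nat -> R) C :
  (forall n, Rabs (u (S n) - u n) <= C * (/ 2) ^ n) ->
  forall n m, (n <= m)%nat -> Rabs (u m - u n) <= 2 * C * (/ 2) ^ n.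
Proof.
  intros Hu.
  assert (Htel : forall n k, Rabs (u (n + k)%nat - u n) <= 2 * C * ((/ 2) ^ n - (/ 2) ^ (n + k))).
  { intros n k. induction k as [|k IH].
    - rewrite Nat.add_0_r, !Rminus_diag, Rabs_R0. lra.
    - replace (n + S k)%nat with (S (n + k)) by lia.
      pose proof (Hu (n + k)%nat) as Hs.
      pose proof (Rabs_triang (u (S (n + k)) - u (n + k)%nat) (u (n + k)%nat - u n)).
      replace (u (S (n + k)) - u (n + k)%nat + (u (n + k)%nat - u n))
        with (u (S (n + k)) - u n) in * by ring.
      replace ((/ 2) ^ S (n + k)) with (/ 2 * (/ 2) ^ (n + k)) by reflexivity.
      lra. }
  assert (HC : 0 <= C)
    by (specialize (Hu 0%nat); simpl in Hu; pose proof (Rabs_pos (u 1%nat - u 0%nat)); lra).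
  intros n m Hnm. replace m with (n + (m - n))%nat by lia.
  pose proof (Htel n (m - n)%nat). pose proof (pow_le (/ 2) (n + (m - n)) ltac:(lra)). nra.
Qed.

Lemma Lim_seq_geometric_tail (u : nat -> R) C :
  (forall n, Rabs (u (S n) - u n) <= C * (/ 2) ^ n) ->
  forall n, Rabs (Lim_seq u - u n) <= 2 * C * (/ 2) ^ n.
Proof.
  intros Hu.
  pose proof (Rabs_sub_le_geometric u C Hu) as Hm.
  assert (Hlim : is_lim_seq u (real (Lim_seq u))).
  { destruct (proj2 (ex_lim_seq_cauchy_corr u)) as [l Hl].
    2: { rewrite (is_lim_seq_unique _ _ Hl). exact Hl. }
    intros eps. destruct (geometric_lt (4 * C) eps (cond_pos eps)) as [N HN].
    exists N. intros n m Hn Hm'.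
    pose proof (Hm N n Hn). pose proof (Hm N m Hm').
    pose proof (Rabs_triang (u n - u N) (u N - u m)) as Htri.
    rewrite (Rabs_minus_sym (u N)) in Htri.
    replace (u n - u N + (u N - u m)) with (u n - u m) in Htri by ring.
    lra. }
  intros n.
  assert (Htail : is_lim_seq (fun k => u (k + n)%nat - u n) (Lim_seq u - u n)).
  { apply (is_lim_seq_minus' _ _ (real (Lim_seq u))); [|apply is_lim_seq_const].
    now apply (is_lim_seq_incr_n u n). }
  pose proof (is_lim_seq_abs _ _ Htail) as Habs.
  refine (is_lim_seq_le _ _ _ _ _ Habs (is_lim_seq_const (2 * C * (/ 2) ^ n))).
  intros k. apply Hm. lia.
Qed.

Lemma lipschitz_of_geometric_limit (f : nat -> R -> R) (g : R -> R) B Ct Cs t s :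
  (forall n, Rabs (g t - f n t) <= Ct * (/ 2) ^ n) ->
  (forall n, Rabs (g s - f n s) <= Cs * (/ 2) ^ n) ->
  (forall n, Rabs (f n t - f n s) <= B * Rabs (t - s)) ->
  Rabs (g t - g s) <= B * Rabs (t - s).
Proof.
  intros Ht Hs Hf. apply (le_of_le_add_geometric _ _ (Ct + Cs)). intros n.
  specialize (Ht n). specialize (Hs n). specialize (Hf n).
  rewrite Rabs_minus_sym in Hs.
  pose proof (Rabs_triang (g t - f n t) (f n t - f n s)).
  pose proof (Rabs_triang (g t - f n t + (f n t - f n s)) (f n s - g s)).
  replace (g t - f n t + (f n t - f n s) + (f n s - g s)) with (g t - g s) in * by ring.
  lra.
Qed.

Lemma eq_prim_of_geometric_approx (f : nat -> R -> R) (g : R -> R) c y t D : 0 <= t ->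
  (forall n x, continuity_pt (f n) x) -> (forall x, continuity_pt g x) ->
  (forall n, Rabs (y - prim c (f n) t) <= D * (/ 2) ^ n) ->
  (forall n s, 0 <= s <= t -> Rabs (f n s - g s) <= D * (/ 2) ^ n) ->
  y = prim c g t.
Proof.
  intros Ht Hf Hg Hy Hfg.
  apply Rminus_diag_uniq, Rabs_eq_0, Rle_antisym; [|apply Rabs_pos].
  apply (le_of_le_add_geometric _ _ (D + t * D)). intros n.
  pose proof (Rabs_prim_sub_le c (f n) g t _ Ht (Hf n) Hg (Hfg n)).
  pose proof (Rabs_triang (y - prim c (f n) t) (prim c (f n) t - prim c g t)).
  replace (y - prim c (f n) t + (prim c (f n) t - prim c g t)) with (y - prim c g t) in * by ring.
  specialize (Hy n). lra.
Qed.

Definition ode_solution (F G : R -> R -> R) (x v : R -> R) : Prop :=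
  forall t, 0 <= t -> is_derive x t (F (x t) (v t)) /\ is_derive v t (G (x t) (v t)).

Section Picard.

Variables (F G : R -> R -> R) (B L x0 x1 : R).

Hypothesis F_bounded : forall x v, Rabs (F x v) <= B.
Hypothesis G_bounded : forall x v, Rabs (G x v) <= B.
Hypothesis F_lipschitz : forall x v x' v',
  Rabs (F x v - F x' v') <= L * (Rabs (x - x') + Rabs (v - v')).
Hypothesis G_lipschitz : forall x v x' v',
  Rabs (G x v - G x' v') <= L * (Rabs (x - x') + Rabs (v - v')).

Fixpoint picard (n : nat) : (R -> R) * (R -> R) :=
  match n with
  | O => (fun _ => x0, fun _ => x1)
  | S n => let XV := picard n in
      (prim x0 (fun s => F (fst XV s) (snd XV s)), prim x1 (fun s => G (fst XV s) (snd XV s)))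
  end.

Local Notation X n := (fst (picard n)).
Local Notation V n := (snd (picard n)).

Lemma picard_continuous n t : continuity_pt (X n) t /\ continuity_pt (V n) t.
Proof.
  revert t. induction n as [|n IH]; intros t; simpl.
  - split; now apply continuity_pt_const.
  - split; eapply continuity_pt_of_is_derive; apply is_derive_prim; intros s;
      [apply (continuity_pt_lipschitz2 F L)|apply (continuity_pt_lipschitz2 G L)]; auto; apply IH.
Qed.

Lemma picard_derive n t :
  is_derive (X (S n)) t (F (X n t) (V n t)) /\ is_derive (V (S n)) t (G (X n t) (V n t)).
Proof.
  split; [apply (is_derive_prim x0 (fun s => F (X n s) (V n s)))
         |apply (is_derive_prim x1 (fun s => G (X n s) (V n s)))];
    intros s; [apply (continuity_pt_lipschitz2 F L)|apply (continuity_pt_lipschitz2 G L)]; auto;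
    apply picard_continuous.
Qed.

Lemma picard_at_0 n : X n 0 = x0 /\ V n 0 = x1.
Proof. destruct n; simpl; [auto|]. now rewrite !prim_0. Qed.

Lemma picard_bound_nonneg : 0 <= B.
Proof. pose proof (Rabs_pos (F 0 0)). pose proof (F_bounded 0 0). lra. Qed.

Lemma picard_lipschitz_nonneg : 0 <= L.
Proof.
  pose proof (F_lipschitz 1 0 0 0) as H.
  rewrite Rminus_0_r, Rminus_diag, Rabs_R0, Rabs_R1, Rplus_0_r, Rmult_1_r in H.
  pose proof (Rabs_pos (F 1 0 - F 0 0)). lra.
Qed.

(* With this [K], each Picard step halves the error measured with the weight [exp (- 2 K t)]. *)
Let K := 2 * L + 1.

Lemma picard_step_0 t : 0 <= t ->
  Rabs (X 1 t - X 0 t) + Rabs (V 1 t - V 0 t) <= B * exp (2 * K * t).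
Proof.
  intros Ht.
  pose proof picard_bound_nonneg as HB. pose proof picard_lipschitz_nonneg as HL.
  assert (HK : 0 < 2 * K) by (unfold K; lra).
  assert (Hexp : forall s, 0 <= s -> 1 <= exp (2 * K * s)).
  { intros s Hs. rewrite <- exp_0. apply exp_le_compat. nra. }
  assert (HX : Rabs (X 1 t - X 0 t) <= B * exp (2 * K * t) / (2 * K)).
  { apply (Rabs_le_of_derive_le_exp (fun s => X 1 s - X 0 s) (fun s => F (X 0 s) (V 0 s) - 0));
      auto.
    - intros s. exact (is_derive_minus (X 1) (X 0) s _ _
                         (proj1 (picard_derive 0 s)) (is_derive_const x0 s)).
    - destruct (picard_at_0 1) as [-> _]. simpl. ring.
    - intros s Hs. rewrite Rminus_0_r. specialize (Hexp s (proj1 Hs)).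
      pose proof (F_bounded (X 0 s) (V 0 s)). nra. }
  assert (HV : Rabs (V 1 t - V 0 t) <= B * exp (2 * K * t) / (2 * K)).
  { apply (Rabs_le_of_derive_le_exp (fun s => V 1 s - V 0 s) (fun s => G (X 0 s) (V 0 s) - 0));
      auto.
    - intros s. exact (is_derive_minus (V 1) (V 0) s _ _
                         (proj2 (picard_derive 0 s)) (is_derive_const x1 s)).
    - destruct (picard_at_0 1) as [_ ->]. simpl. ring.
    - intros s Hs. rewrite Rminus_0_r. specialize (Hexp s (proj1 Hs)).
      pose proof (G_bounded (X 0 s) (V 0 s)). nra. }
  assert (B * exp (2 * K * t) / (2 * K) <= B * exp (2 * K * t) / 2).
  { unfold Rdiv. apply Rmult_le_compat_l; [pose proof (exp_pos (2 * K * t)); nra|].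
    apply Rinv_le_contravar; unfold K; lra. }
  lra.
Qed.

Lemma picard_step_S n t : 0 <= t ->
  (forall s, 0 <= s <= t ->
     Rabs (X (S n) s - X n s) + Rabs (V (S n) s - V n s) <= B * exp (2 * K * s) * (/ 2) ^ n) ->
  Rabs (X (S (S n)) t - X (S n) t) + Rabs (V (S (S n)) t - V (S n) t)
  <= B * exp (2 * K * t) * (/ 2) ^ S n.
Proof.
  intros Ht IH.
  pose proof picard_bound_nonneg as HB. pose proof picard_lipschitz_nonneg as HL.
  assert (HK : 0 < 2 * K) by (unfold K; lra).
  set (C := L * B * (/ 2) ^ n).
  assert (Hd : forall s, 0 <= s <= t ->
    L * (Rabs (X (S n) s - X n s) + Rabs (V (S n) s - V n s)) <= C * exp (2 * K * s)).
  { intros s Hs. unfold C.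
    replace (L * B * (/ 2) ^ n * exp (2 * K * s)) with (L * (B * exp (2 * K * s) * (/ 2) ^ n))
      by ring.
    apply Rmult_le_compat_l; [exact HL|]. now apply IH. }
  assert (HX : Rabs (X (S (S n)) t - X (S n) t) <= C * exp (2 * K * t) / (2 * K)).
  { apply (Rabs_le_of_derive_le_exp (fun s => X (S (S n)) s - X (S n) s)
      (fun s => F (X (S n) s) (V (S n) s) - F (X n s) (V n s))); auto.
    - intros s. exact (is_derive_minus (X (S (S n))) (X (S n)) s _ _
                         (proj1 (picard_derive (S n) s)) (proj1 (picard_derive n s))).
    - destruct (picard_at_0 (S (S n))) as [-> _]. destruct (picard_at_0 (S n)) as [-> _]. ring.
    - intros s Hs. eapply Rle_trans; [apply F_lipschitz|]. now apply Hd. }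
  assert (HV : Rabs (V (S (S n)) t - V (S n) t) <= C * exp (2 * K * t) / (2 * K)).
  { apply (Rabs_le_of_derive_le_exp (fun s => V (S (S n)) s - V (S n) s)
      (fun s => G (X (S n) s) (V (S n) s) - G (X n s) (V n s))); auto.
    - intros s. exact (is_derive_minus (V (S (S n))) (V (S n)) s _ _
                         (proj2 (picard_derive (S n) s)) (proj2 (picard_derive n s))).
    - destruct (picard_at_0 (S (S n))) as [_ ->]. destruct (picard_at_0 (S n)) as [_ ->]. ring.
    - intros s Hs. eapply Rle_trans; [apply G_lipschitz|]. now apply Hd. }
  set (P := B * (/ 2) ^ n * exp (2 * K * t)).
  assert (HP : 0 <= P).
  { apply Rmult_le_pos; [apply Rmult_le_pos; [exact HB|apply pow_le; lra]|apply Rlt_le, exp_pos]. }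
  assert (C * exp (2 * K * t) / (2 * K) + C * exp (2 * K * t) / (2 * K)
          <= B * exp (2 * K * t) * (/ 2) ^ S n).
  { replace (C * exp (2 * K * t) / (2 * K) + C * exp (2 * K * t) / (2 * K))
      with (2 * L * P / (2 * K)) by (unfold C, P; field; lra).
    replace (B * exp (2 * K * t) * (/ 2) ^ S n) with (K * P / (2 * K))
      by (unfold P; simpl; field; lra).
    unfold Rdiv. apply Rmult_le_compat_r; [apply Rlt_le, Rinv_0_lt_compat; lra|].
    unfold K. nra. }
  lra.
Qed.

Lemma picard_step n t : 0 <= t ->
  Rabs (X (S n) t - X n t) + Rabs (V (S n) t - V n t) <= B * exp (2 * K * t) * (/ 2) ^ n.
Proof.
  revert t. induction n as [|n IH]; intros t Ht.
  - rewrite pow_O, Rmult_1_r. now apply picard_step_0.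
  - apply picard_step_S; [exact Ht|]. intros s Hs. apply IH. lra.
Qed.

Definition picard_lim_x t := real (Lim_seq (fun n => X n (Rmax 0 t))).

Definition picard_lim_v t := real (Lim_seq (fun n => V n (Rmax 0 t))).

Lemma picard_tail n t : 0 <= t ->
  Rabs (picard_lim_x t - X n t) <= 2 * (B * exp (2 * K * t)) * (/ 2) ^ n /\
  Rabs (picard_lim_v t - V n t) <= 2 * (B * exp (2 * K * t)) * (/ 2) ^ n.
Proof.
  intros Ht. unfold picard_lim_x, picard_lim_v. rewrite Rmax_right by exact Ht.
  split; [apply (Lim_seq_geometric_tail (fun n => X n t))
         |apply (Lim_seq_geometric_tail (fun n => V n t))];
    intros m; pose proof (picard_step m t Ht);
    pose proof (Rabs_pos (X (S m) t - X m t)); pose proof (Rabs_pos (V (S m) t - V m t)); lra.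
Qed.

Lemma picard_iterate_lipschitz n t s :
  Rabs (X n t - X n s) <= B * Rabs (t - s) /\ Rabs (V n t - V n s) <= B * Rabs (t - s).
Proof.
  destruct n as [|n].
  - simpl. rewrite !Rminus_diag, Rabs_R0.
    pose proof picard_bound_nonneg. pose proof (Rabs_pos (t - s)). split; nra.
  - split.
    + apply (Rabs_sub_le_of_derive_bound _ (fun s => F (X n s) (V n s))); intros r;
        [exact (proj1 (picard_derive n r))|apply F_bounded].
    + apply (Rabs_sub_le_of_derive_bound _ (fun s => G (X n s) (V n s))); intros r;
        [exact (proj2 (picard_derive n r))|apply G_bounded].
Qed.

Lemma picard_lim_lipschitz t s :
  Rabs (picard_lim_x t - picard_lim_x s) <= B * Rabs (t - s) /\
  Rabs (picard_lim_v t - picard_lim_v s) <= B * Rabs (t - s).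
Proof.
  assert (Hclip : Rabs (Rmax 0 t - Rmax 0 s) <= Rabs (t - s)).
  { unfold Rmax; repeat destruct Rle_dec; unfold Rabs; repeat destruct Rcase_abs; lra. }
  assert (HB : 0 <= B) by exact picard_bound_nonneg.
  assert (Hmax : forall u, Rmax 0 (Rmax 0 u) = Rmax 0 u) by (intros u; apply Rmax_right, Rmax_l).
  assert (Ex : forall u, picard_lim_x u = picard_lim_x (Rmax 0 u))
    by (intros u; unfold picard_lim_x; now rewrite Hmax).
  assert (Ev : forall u, picard_lim_v u = picard_lim_v (Rmax 0 u))
    by (intros u; unfold picard_lim_v; now rewrite Hmax).
  rewrite (Ex t), (Ex s), (Ev t), (Ev s).
  assert (Ht := Rmax_l 0 t). assert (Hs := Rmax_l 0 s).
  assert (Hweak : forall d, d <= B * Rabs (Rmax 0 t - Rmax 0 s) -> d <= B * Rabs (t - s))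
    by (intros d Hd; pose proof (Rmult_le_compat_l B _ _ HB Hclip); lra).
  split; apply Hweak.
  - apply (lipschitz_of_geometric_limit (fun n => X n) _ _ (2 * (B * exp (2 * K * Rmax 0 t)))
             (2 * (B * exp (2 * K * Rmax 0 s)))); intros n;
      [apply (picard_tail n _ Ht)|apply (picard_tail n _ Hs)|apply picard_iterate_lipschitz].
  - apply (lipschitz_of_geometric_limit (fun n => V n) _ _ (2 * (B * exp (2 * K * Rmax 0 t)))
             (2 * (B * exp (2 * K * Rmax 0 s)))); intros n;
      [apply (picard_tail n _ Ht)|apply (picard_tail n _ Hs)|apply picard_iterate_lipschitz].
Qed.

Lemma picard_lim_continuous t : continuity_pt picard_lim_x t /\ continuity_pt picard_lim_v t.
Proof.
  split; apply (continuity_pt_of_lipschitz _ B); intros s; apply picard_lim_lipschitz.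
Qed.

Lemma picard_tail_le n s t : 0 <= s <= t ->
  Rabs (picard_lim_x s - X n s) + Rabs (picard_lim_v s - V n s)
  <= 4 * B * exp (2 * K * t) * (/ 2) ^ n.
Proof.
  intros Hs. destruct (picard_tail n s (proj1 Hs)) as [T1 T2].
  assert (B * exp (2 * K * s) * (/ 2) ^ n <= B * exp (2 * K * t) * (/ 2) ^ n).
  { apply Rmult_le_compat_r; [apply pow_le; lra|].
    apply Rmult_le_compat_l; [exact picard_bound_nonneg|].
    apply exp_le_compat. pose proof picard_lipschitz_nonneg. unfold K. nra. }
  lra.
Qed.

Lemma picard_lim_prim t : 0 <= t ->
  picard_lim_x t = prim x0 (fun s => F (picard_lim_x s) (picard_lim_v s)) t /\
  picard_lim_v t = prim x1 (fun s => G (picard_lim_x s) (picard_lim_v s)) t.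
Proof.
  intros Ht. pose proof picard_lipschitz_nonneg as HL.
  set (T := 4 * B * exp (2 * K * t)).
  assert (HT : forall n, 0 <= T * (/ 2) ^ n).
  { intros n. apply Rmult_le_pos; [|apply pow_le; lra].
    pose proof picard_bound_nonneg. pose proof (exp_pos (2 * K * t)). unfold T. nra. }
  assert (HLT : forall n, 0 <= L * (T * (/ 2) ^ n)) by (intros n; apply Rmult_le_pos; auto).
  set (D := (1 + L) * T).
  assert (Hlim : forall n,
    Rabs (picard_lim_x t - X (S n) t) <= D * (/ 2) ^ n /\
    Rabs (picard_lim_v t - V (S n) t) <= D * (/ 2) ^ n).
  { intros n. pose proof (picard_tail_le (S n) t t ltac:(lra)) as Htail.
    pose proof (Rabs_pos (picard_lim_x t - X (S n) t)).
    pose proof (Rabs_pos (picard_lim_v t - V (S n) t)).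
    replace (4 * B * exp (2 * K * t) * (/ 2) ^ S n) with (T * (/ 2) ^ n / 2) in Htail
      by (unfold T; simpl; field).
    replace (D * (/ 2) ^ n) with (T * (/ 2) ^ n + L * (T * (/ 2) ^ n)) by (unfold D; ring).
    pose proof (HT n). pose proof (HLT n). lra. }
  assert (Happrox : forall n s, 0 <= s <= t ->
    L * (Rabs (X n s - picard_lim_x s) + Rabs (V n s - picard_lim_v s)) <= D * (/ 2) ^ n).
  { intros n s Hs. pose proof (picard_tail_le n s t Hs) as Htail.
    rewrite (Rabs_minus_sym (picard_lim_x s)), (Rabs_minus_sym (picard_lim_v s)) in Htail.
    replace (D * (/ 2) ^ n) with (T * (/ 2) ^ n + L * (T * (/ 2) ^ n)) by (unfold D; ring).
    pose proof (Rmult_le_compat_l L _ _ HL Htail). pose proof (HT n). unfold T in *. lra. }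
  assert (Hcx := fun n s => proj1 (picard_continuous n s)).
  assert (Hcv := fun n s => proj2 (picard_continuous n s)).
  assert (Hcl := picard_lim_continuous).
  split.
  - apply (eq_prim_of_geometric_approx (fun n s => F (X n s) (V n s)) _ x0 _ t D Ht).
    + intros n s. now apply (continuity_pt_lipschitz2 F L).
    + intros s. apply (continuity_pt_lipschitz2 F L); auto; apply Hcl.
    + intros n. apply Hlim.
    + intros n s Hs. eapply Rle_trans; [apply F_lipschitz|]. now apply Happrox.
  - apply (eq_prim_of_geometric_approx (fun n s => G (X n s) (V n s)) _ x1 _ t D Ht).
    + intros n s. now apply (continuity_pt_lipschitz2 G L).
    + intros s. apply (continuity_pt_lipschitz2 G L); auto; apply Hcl.
    + intros n. apply Hlim.
    + intros n s Hs. eapply Rle_trans; [apply G_lipschitz|]. now apply Happrox.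
Qed.

Theorem picard_solution : exists x v, x 0 = x0 /\ v 0 = x1 /\ ode_solution F G x v.
Proof.
  set (f := fun s => F (picard_lim_x s) (picard_lim_v s)).
  set (g := fun s => G (picard_lim_x s) (picard_lim_v s)).
  exists (prim x0 f), (prim x1 g). split; [apply prim_0|split; [apply prim_0|]].
  intros t Ht. destruct (picard_lim_prim t Ht) as [Ex Ev]. fold f g in Ex, Ev.
  rewrite <- Ex, <- Ev.
  split; [apply (is_derive_prim x0 f)|apply (is_derive_prim x1 g)]; intros s;
    [apply (continuity_pt_lipschitz2 F L)|apply (continuity_pt_lipschitz2 G L)]; auto;
    apply picard_lim_continuous.
Qed.

End Picard.

(** * Energy and global existence *)

Definition clamp (M x : R) := Rmax (- M) (Rmin M x).

Lemma clamp_lipschitz M x y : Rabs (clamp M x - clamp M y) <= Rabs (x - y).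
Proof.
  unfold clamp, Rmax, Rmin; repeat destruct Rle_dec; unfold Rabs; repeat destruct Rcase_abs; lra.
Qed.

Lemma Rabs_clamp_le M x : 0 <= M -> Rabs (clamp M x) <= M.
Proof.
  intros; unfold clamp, Rmax, Rmin; repeat destruct Rle_dec; unfold Rabs;
    repeat destruct Rcase_abs; lra.
Qed.

Lemma clamp_id M x : Rabs x <= M -> clamp M x = x.
Proof.
  intros H; apply Rabs_le_between in H. unfold clamp, Rmax, Rmin; repeat destruct Rle_dec; lra.
Qed.

Definition damping_force (p : nat) (mu a x v : R) := - mu * v - a * x ^ p.

Definition truncated_force (p : nat) (mu a M x v : R) :=
  damping_force p mu a (clamp M x) (clamp M v).

Lemma Rabs_truncated_force_le p mu a M x v : 0 <= mu -> 0 <= a -> 0 <= M ->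
  Rabs (truncated_force p mu a M x v) <= mu * M + a * M ^ p.
Proof.
  intros Hmu Ha HM. unfold truncated_force, damping_force.
  eapply Rle_trans; [apply Rabs_triang|].
  rewrite Rabs_Ropp, !Rabs_mult, Rabs_Ropp, (Rabs_right mu), (Rabs_right a), <- RPow_abs by lra.
  apply Rplus_le_compat; apply Rmult_le_compat_l; auto.
  - now apply Rabs_clamp_le.
  - apply pow_incr. split; [apply Rabs_pos|now apply Rabs_clamp_le].
Qed.

Lemma truncated_force_lipschitz p mu a M x v x' v' : 0 <= mu -> 0 <= a -> 0 <= M ->
  Rabs (truncated_force p mu a M x v - truncated_force p mu a M x' v')
  <= (mu + a * INR p * M ^ pred p) * (Rabs (x - x') + Rabs (v - v')).
Proof.
  intros Hmu Ha HM. unfold truncated_force, damping_force.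
  replace (- mu * clamp M v - a * clamp M x ^ p - (- mu * clamp M v' - a * clamp M x' ^ p))
    with (- (mu * (clamp M v - clamp M v')) - a * (clamp M x ^ p - clamp M x' ^ p)) by ring.
  eapply Rle_trans; [apply Rabs_triang|].
  rewrite !Rabs_Ropp, !Rabs_mult, (Rabs_right mu), (Rabs_right a) by lra.
  pose proof (Rabs_pos (x - x')). pose proof (Rabs_pos (v - v')).
  assert (Hc : 0 <= INR p * M ^ pred p) by (apply Rmult_le_pos; [apply pos_INR|apply pow_le; lra]).
  assert (Hv : mu * Rabs (clamp M v - clamp M v') <= mu * Rabs (v - v'))
    by (apply Rmult_le_compat_l; [lra|apply clamp_lipschitz]).
  assert (Hx : Rabs (clamp M x ^ p - clamp M x' ^ p) <= INR p * M ^ pred p * Rabs (x - x')).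
  { eapply Rle_trans; [apply Rabs_pow_sub_le; apply Rabs_clamp_le; lra|].
    apply Rmult_le_compat_l; [exact Hc|apply clamp_lipschitz]. }
  apply (Rmult_le_compat_l a) in Hx; [|lra].
  assert (0 <= mu * Rabs (x - x')) by (apply Rmult_le_pos; lra).
  assert (0 <= a * (INR p * M ^ pred p) * Rabs (v - v'))
    by (apply Rmult_le_pos; [apply Rmult_le_pos|]; lra).
  replace ((mu + a * INR p * M ^ pred p) * (Rabs (x - x') + Rabs (v - v')))
    with (mu * Rabs (v - v') + a * (INR p * M ^ pred p * Rabs (x - x'))
          + (mu * Rabs (x - x') + a * (INR p * M ^ pred p) * Rabs (v - v'))) by ring.
  lra.
Qed.

Definition energy (p : nat) (a x v : R) := v ^ 2 / 2 + a * x ^ (p + 1) / INR (p + 1).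

Lemma energy_nonneg p a x v : Nat.Odd p -> 0 <= a -> 0 <= energy p a x v.
Proof.
  intros Hp Ha. unfold energy.
  assert (0 < INR (p + 1)) by (apply lt_0_INR; lia).
  pose proof (pow_succ_odd_nonneg p x Hp). pose proof (pow2_ge_0 v).
  assert (0 <= a * x ^ (p + 1) / INR (p + 1))
    by (apply Rdiv_le_0_compat; [apply Rmult_le_pos|]; lra).
  lra.
Qed.

Definition energy_radius (p : nat) (a E : R) := 1 + 2 * E + INR (p + 1) * E / a.

Lemma energy_radius_ge1 p a E : 0 < a -> 0 <= E -> 1 <= energy_radius p a E.
Proof.
  intros Ha HE. unfold energy_radius.
  assert (0 <= INR (p + 1) * E / a)
    by (apply Rdiv_le_0_compat; [apply Rmult_le_pos; [apply pos_INR|]|]; lra).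
  lra.
Qed.

Lemma Rabs_le_energy_radius p a x v E : Nat.Odd p -> 0 < a -> energy p a x v <= E ->
  Rabs x <= energy_radius p a E /\ Rabs v <= energy_radius p a E.
Proof.
  intros Hp Ha H.
  pose proof (energy_nonneg p a x v Hp ltac:(lra)) as HE0.
  unfold energy_radius. unfold energy in H, HE0.
  assert (Hn : 0 < INR (p + 1)) by (apply lt_0_INR; lia).
  assert (Hx : 0 <= a * x ^ (p + 1) / INR (p + 1))
    by (apply Rdiv_le_0_compat; [apply Rmult_le_pos; [lra|apply pow_succ_odd_nonneg]|]; auto).
  assert (Hv : 0 <= v ^ 2 / 2) by (apply Rdiv_le_0_compat; [apply pow2_ge_0|lra]).
  assert (HR : 0 <= INR (p + 1) * E / a) by (apply Rdiv_le_0_compat; [apply Rmult_le_pos|]; lra).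
  split.
  - destruct (Rle_dec (Rabs x) 1) as [|Hx1]; [lra|].
    assert (Hxp : Rabs x <= Rabs x ^ (p + 1)).
    { rewrite <- (pow_1 (Rabs x)) at 1. apply Rle_pow; [lra|lia]. }
    rewrite RPow_abs, (Rabs_right (x ^ (p + 1))) in Hxp by (apply Rle_ge, pow_succ_odd_nonneg, Hp).
    assert (x ^ (p + 1) <= INR (p + 1) * E / a).
    { apply (Rmult_le_reg_l (a / INR (p + 1))); [apply Rdiv_lt_0_compat; lra|].
      replace (a / INR (p + 1) * (INR (p + 1) * E / a)) with E by (field; lra).
      replace (a / INR (p + 1) * x ^ (p + 1)) with (a * x ^ (p + 1) / INR (p + 1)) by (field; lra).
      lra. }
    lra.
  - destruct (Rle_dec (Rabs v) 1) as [|Hv1]; [lra|].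
    assert (Rabs v <= v ^ 2) by (rewrite <- pow2_abs; nra).
    lra.
Qed.

Lemma is_derive_energy p a (x v : R -> R) dx dv s : is_derive x s dx -> is_derive v s dv ->
  is_derive (fun s => energy p a (x s) (v s)) s (v s * dv + a * x s ^ p * dx).
Proof.
  intros Hx Hv. unfold energy.
  auto_derive.
  - repeat split; eexists; eauto.
  - rewrite (Derive_eta x s _ Hx), (Derive_eta v s _ Hv).
    replace (Init.Nat.pred (p + 1)) with p by lia.
    field. apply not_0_INR. lia.
Qed.

Lemma continuity_pt_energy p a (x v : R -> R) s : continuity_pt x s -> continuity_pt v s ->
  continuity_pt (fun s => energy p a (x s) (v s)) s.
Proof.
  intros Hx Hv. unfold energy, Rdiv.
  repeat first [ apply continuity_pt_plus | apply continuity_pt_mult | apply continuity_pt_pow_fun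
               | apply continuity_pt_const; intros ? ?; reflexivity | assumption ].
Qed.

Lemma energy_le_initial p mu a (x v : R -> R) t : 0 <= mu -> 0 <= t ->
  (forall s, 0 <= s <= t -> continuity_pt x s /\ continuity_pt v s) ->
  (forall s, 0 < s < t ->
     is_derive x s (v s) /\ is_derive v s (damping_force p mu a (x s) (v s))) ->
  energy p a (x t) (v t) <= energy p a (x 0) (v 0).
Proof.
  intros Hmu Ht Hc Hd.
  apply (nonincreasing_of_derive_nonpos (fun s => energy p a (x s) (v s))
    (fun s => v s * damping_force p mu a (x s) (v s) + a * x s ^ p * v s) 0 t Ht).
  - intros s Hs. destruct (Hd s Hs). now apply is_derive_energy.
  - intros s Hs. destruct (Hc s Hs). now apply continuity_pt_energy.
  - intros s _. unfold damping_force.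
    replace (v s * (- mu * v s - a * x s ^ p) + a * x s ^ p * v s) with (- (mu * (v s * v s)))
      by ring.
    pose proof (Rmult_le_pos mu _ Hmu (Rle_0_sqr (v s))). unfold Rsqr in *. lra.
Qed.

Definition damped_solution (p : nat) (mu a : R) (x v : R -> R) : Prop :=
  (forall t, 0 <= t -> continuity_pt x t /\ continuity_pt v t) /\
  (forall t, 0 < t -> is_derive x t (v t) /\ is_derive v t (damping_force p mu a (x t) (v t))).

Lemma damped_solution_bounded p mu a x v : Nat.Odd p -> 0 <= mu -> 0 < a ->
  damped_solution p mu a x v -> forall t, 0 <= t ->
  Rabs (x t) <= energy_radius p a (energy p a (x 0) (v 0)) /\
  Rabs (v t) <= energy_radius p a (energy p a (x 0) (v 0)).
Proof.
  intros Hp Hmu Ha [Hc Hd] t Ht.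
  apply Rabs_le_energy_radius; auto.
  apply (energy_le_initial p mu); auto.
  - intros s Hs. apply Hc. lra.
  - intros s Hs. apply Hd. lra.
Qed.

Lemma damped_solution_of_ode_solution p mu a x v :
  ode_solution (fun _ v => v) (damping_force p mu a) x v -> damped_solution p mu a x v.
Proof.
  intros H. split; intros t Ht.
  - destruct (H t Ht). split; eapply continuity_pt_of_is_derive; eauto.
  - apply H. lra.
Qed.

Lemma truncated_solution_exists p mu a M x0 x1 : 0 <= mu -> 0 <= a -> 0 <= M ->
  exists x v, x 0 = x0 /\ v 0 = x1 /\
    ode_solution (fun _ v => clamp M v) (truncated_force p mu a M) x v.
Proof.
  intros Hmu Ha HM.
  pose proof (pow_le M p HM) as HMp.
  assert (0 <= a * INR p * M ^ pred p)
    by (repeat apply Rmult_le_pos; try apply pos_INR; try apply pow_le; lra).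
  apply (picard_solution _ _ (M + (mu * M + a * M ^ p)) (1 + (mu + a * INR p * M ^ pred p))).
  - intros _ v. pose proof (Rabs_clamp_le M v HM).
    pose proof (Rmult_le_pos mu M Hmu HM). pose proof (Rmult_le_pos a _ Ha HMp). lra.
  - intros x v. pose proof (Rabs_truncated_force_le p mu a M x v Hmu Ha HM). lra.
  - intros x v x' v'. pose proof (clamp_lipschitz M v v').
    pose proof (Rabs_pos (x - x')). pose proof (Rabs_pos (v - v')).
    pose proof (Rmult_le_pos (mu + a * INR p * M ^ pred p) (Rabs (x - x') + Rabs (v - v'))
                  ltac:(lra) ltac:(lra)).
    lra.
  - intros x v x' v'.
    pose proof (truncated_force_lipschitz p mu a M x v x' v' Hmu Ha HM).
    pose proof (Rabs_pos (x - x')). pose proof (Rabs_pos (v - v')). nra.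
Qed.

(* While the truncation is inactive the energy does not increase, which keeps
   [|x| + |v| <= 2 R0 < M]; continuous induction makes this global. *)
Lemma ode_solution_of_truncated p mu a M x v : Nat.Odd p -> 0 <= mu -> 0 < a ->
  2 * energy_radius p a (energy p a (x 0) (v 0)) < M ->
  ode_solution (fun _ v => clamp M v) (truncated_force p mu a M) x v ->
  ode_solution (fun _ v => v) (damping_force p mu a) x v.
Proof.
  intros Hp Hmu Ha HM Hxv.
  set (R0 := energy_radius p a (energy p a (x 0) (v 0))) in HM.
  assert (Hinactive : forall t, 0 <= t -> Rabs (x t) <= M -> Rabs (v t) <= M ->
    is_derive x t (v t) /\ is_derive v t (damping_force p mu a (x t) (v t))).
  { intros t Ht Hxt Hvt. destruct (Hxv t Ht) as [Dx Dv].
    unfold truncated_force in Dv. cbv beta in Dx.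
    rewrite (clamp_id M (v t) Hvt) in Dx, Dv. rewrite (clamp_id M (x t) Hxt) in Dv. now split. }
  assert (Hbound : forall t, 0 <= t -> Rabs (x t) + Rabs (v t) <= 2 * R0).
  { apply (continuous_induction _ _ M HM).
    - intros s Hs. destruct (Hxv s Hs) as [Dx Dv].
      apply continuity_pt_plus;
        [apply (continuity_pt_comp x Rabs)|apply (continuity_pt_comp v Rabs)];
        try apply Rcontinuity_abs; eapply continuity_pt_of_is_derive; eassumption.
    - destruct (Rabs_le_energy_radius p a (x 0) (v 0) _ Hp Ha (Rle_refl _)) as [B1 B2].
      fold R0 in B1, B2. cbv beta. lra.
    - intros t Ht Hle. cbv beta in Hle |- *.
      assert (HE : energy p a (x t) (v t) <= energy p a (x 0) (v 0)).
      { apply (energy_le_initial p mu); auto.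
        - intros s Hs. destruct (Hxv s (proj1 Hs)). split; eapply continuity_pt_of_is_derive; eauto.
        - intros s Hs. specialize (Hle s ltac:(lra)).
          pose proof (Rabs_pos (x s)). pose proof (Rabs_pos (v s)).
          apply Hinactive; lra. }
      destruct (Rabs_le_energy_radius p a _ _ _ Hp Ha HE) as [B1 B2].
      fold R0 in B1, B2. lra. }
  intros t Ht. specialize (Hbound t Ht).
  pose proof (Rabs_pos (x t)). pose proof (Rabs_pos (v t)).
  apply Hinactive; auto; lra.
Qed.

Lemma damped_solution_exists p mu a x0 x1 : Nat.Odd p -> 0 <= mu -> 0 < a ->
  exists x v, x 0 = x0 /\ v 0 = x1 /\ ode_solution (fun _ v => v) (damping_force p mu a) x v.
Proof.
  intros Hp Hmu Ha.
  set (M := 2 * energy_radius p a (energy p a x0 x1) + 1).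
  assert (HM : 0 <= M).
  { pose proof (energy_radius_ge1 p a (energy p a x0 x1) Ha
                  (energy_nonneg p a x0 x1 Hp ltac:(lra))).
    unfold M. lra. }
  destruct (truncated_solution_exists p mu a M x0 x1 Hmu ltac:(lra) HM) as [x [v [Hx0 [Hv0 Hxv]]]].
  exists x, v. split; [exact Hx0|split; [exact Hv0|]].
  apply (ode_solution_of_truncated p mu a M); auto.
  rewrite Hx0, Hv0. unfold M. lra.
Qed.

(** * Uniqueness *)

Lemma damped_difference_ineq a P W U q mu : 0 <= a -> 0 <= P -> 0 <= mu -> Rabs q <= P * Rabs W ->
  - (1 + a * P) * (W ^ 2 + U ^ 2) + 2 * W * U + 2 * U * (- mu * U - a * q) <= 0.
Proof.
  intros Ha HP Hmu Hq.
  assert (Hqu : - (U * q) <= Rabs U * (P * Rabs W)).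
  { pose proof (Rabs_maj2 (U * q)) as Hm. rewrite Rabs_mult in Hm.
    pose proof (Rmult_le_compat_l (Rabs U) _ _ (Rabs_pos U) Hq). lra. }
  assert (Hamgm_abs : 2 * (Rabs U * Rabs W) <= U ^ 2 + W ^ 2).
  { rewrite <- (pow2_abs U), <- (pow2_abs W). pose proof (pow2_ge_0 (Rabs U - Rabs W)). nra. }
  assert (Hamgm : 2 * W * U <= W ^ 2 + U ^ 2) by (pose proof (pow2_ge_0 (W - U)); nra).
  assert (Hdamp : 0 <= mu * U ^ 2) by (apply Rmult_le_pos; auto; apply pow2_ge_0).
  assert (Hamgm_scaled : a * P * (2 * (Rabs U * Rabs W)) <= a * P * (U ^ 2 + W ^ 2))
    by (apply Rmult_le_compat_l; [apply Rmult_le_pos|]; auto).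
  assert (Hqu_scaled : a * (- (U * q)) <= a * (Rabs U * (P * Rabs W)))
    by (apply Rmult_le_compat_l; auto).
  nra.
Qed.

Lemma is_derive_weighted_sq_norm (W U : R -> R) dW dU K s :
  is_derive W s dW -> is_derive U s dU ->
  is_derive (fun s => exp (- K * s) * (W s ^ 2 + U s ^ 2)) s
    (exp (- K * s) * (- K * (W s ^ 2 + U s ^ 2) + 2 * W s * dW + 2 * U s * dU)).
Proof.
  intros HW HU. auto_derive.
  - repeat split; eexists; eauto.
  - rewrite (Derive_eta W s _ HW), (Derive_eta U s _ HU). ring.
Qed.

Lemma continuity_pt_weighted_sq_norm (W U : R -> R) K s :
  continuity_pt W s -> continuity_pt U s ->
  continuity_pt (fun s => exp (- K * s) * (W s ^ 2 + U s ^ 2)) s.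
Proof.
  intros HW HU. apply (continuity_pt_mult (fun s => exp (- K * s))).
  - apply (continuity_pt_comp (fun s => - K * s) exp);
      [apply continuity_pt_scal, continuity_pt_id|apply derivable_continuous_pt, derivable_pt_exp].
  - apply continuity_pt_plus; now apply continuity_pt_pow_fun.
Qed.

(* Gronwall: both solutions stay in the ball given by the initial energy, where [x ^ p] is
   Lipschitz, so [exp (- K s)] times the squared distance in phase space is nonincreasing. *)
Lemma damped_solution_unique p mu a x v y w : Nat.Odd p -> 0 <= mu -> 0 < a ->
  damped_solution p mu a x v -> damped_solution p mu a y w -> x 0 = y 0 -> v 0 = w 0 ->
  forall t, 0 <= t -> x t = y t.
Proof.
  intros Hp Hmu Ha Hxv Hyw Exy Evw t Ht.
  set (Rd := energy_radius p a (energy p a (x 0) (v 0))).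
  pose proof (damped_solution_bounded p mu a x v Hp Hmu Ha Hxv) as Bx.
  pose proof (damped_solution_bounded p mu a y w Hp Hmu Ha Hyw) as By.
  rewrite <- Exy, <- Evw in By. fold Rd in Bx, By.
  assert (HRd : 0 <= Rd) by (destruct (Bx 0 (Rle_refl 0)); pose proof (Rabs_pos (x 0)); lra).
  set (P := INR p * Rd ^ pred p).
  assert (HP : 0 <= P) by (apply Rmult_le_pos; [apply pos_INR|apply pow_le; lra]).
  set (K := 1 + a * P).
  set (phi := fun s => exp (- K * s) * ((x s - y s) ^ 2 + (v s - w s) ^ 2)).
  destruct Hxv as [Cx Dx], Hyw as [Cy Dy].
  assert (Hdec : phi t <= phi 0).
  { apply (nonincreasing_of_derive_nonpos phi (fun s => exp (- K * s) * (- K * ((x s - y s) ^ 2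
      + (v s - w s) ^ 2) + 2 * (x s - y s) * (v s - w s) + 2 * (v s - w s) *
      (damping_force p mu a (x s) (v s) - damping_force p mu a (y s) (w s)))) 0 t Ht).
    - intros s Hs. destruct (Dx s (proj1 Hs)) as [Dx1 Dv1], (Dy s (proj1 Hs)) as [Dy1 Dw1].
      apply (is_derive_weighted_sq_norm (fun s => x s - y s) (fun s => v s - w s));
        [exact (is_derive_minus x y s _ _ Dx1 Dy1)|exact (is_derive_minus v w s _ _ Dv1 Dw1)].
    - intros s Hs. destruct (Cx s (proj1 Hs)), (Cy s (proj1 Hs)).
      apply (continuity_pt_weighted_sq_norm (fun s => x s - y s) (fun s => v s - w s));
        now apply continuity_pt_minus.
    - intros s Hs. unfold damping_force.
      destruct (Bx s ltac:(lra)) as [Bxs _], (By s ltac:(lra)) as [Bys _].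
      replace (- mu * v s - a * x s ^ p - (- mu * w s - a * y s ^ p))
        with (- mu * (v s - w s) - a * (x s ^ p - y s ^ p)) by ring.
      pose proof (damped_difference_ineq a P (x s - y s) (v s - w s) (x s ^ p - y s ^ p) mu
                    ltac:(lra) HP Hmu (Rabs_pow_sub_le _ _ _ p Bxs Bys)) as Hneg.
      fold K in Hneg. pose proof (exp_pos (- K * s)). nra. }
  assert (Hphi0 : phi 0 = 0) by (unfold phi; rewrite Exy, Evw; ring).
  rewrite Hphi0 in Hdec. unfold phi in Hdec.
  pose proof (exp_pos (- K * t)).
  pose proof (pow2_ge_0 (x t - y t)). pose proof (pow2_ge_0 (v t - w t)).
  assert (Hz : (x t - y t) ^ 2 = 0) by nra.
  apply Rminus_diag_uniq. destruct (Req_dec (x t - y t) 0) as [|Hne]; [assumption|].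
  exfalso. exact (pow_nonzero _ 2 Hne Hz).
Qed.

(** * Decay *)

(* Written for the exponent [p = 2 k + 1], so that [x ^ (p + 1) = (x ^ 2) ^ (k + 1)]. *)
Definition lyapunov (k : nat) (mu a x v : R) :=
  v ^ 2 / 2 + (v + mu * x) ^ 2 / 2 + 2 * a * (x ^ 2) ^ (k + 1) / INR (2 * k + 2).

Lemma is_derive_lyapunov k mu a (x v : R -> R) s :
  is_derive x s (v s) -> is_derive v s (damping_force (2 * k + 1) mu a (x s) (v s)) ->
  is_derive (fun s => lyapunov k mu a (x s) (v s)) s (- (mu * (v s ^ 2 + a * (x s ^ 2) ^ (k + 1)))).
Proof.
  intros Dx Dv. unfold lyapunov, damping_force in *.
  auto_derive.
  - repeat split; eexists; eauto.
  - rewrite (Derive_eta x s _ Dx), (Derive_eta v s _ Dv).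
    replace (INR (k + (k + 0) + 2)) with (2 * (INR k + 1)) by (rewrite !plus_INR; simpl; ring).
    replace (INR (k + 1)) with (INR k + 1) by (rewrite plus_INR; simpl; ring).
    replace (Init.Nat.pred (k + 1)) with k by lia.
    replace (x s * (x s * 1)) with (x s ^ 2) by ring.
    rewrite <- pow_mult, !pow_add, pow_mult.
    field. pose proof (pos_INR k). lra.
Qed.

Lemma continuity_pt_lyapunov k mu a (x v : R -> R) s : continuity_pt x s -> continuity_pt v s ->
  continuity_pt (fun s => lyapunov k mu a (x s) (v s)) s.
Proof.
  intros Hx Hv. unfold lyapunov, Rdiv.
  repeat first [ apply continuity_pt_plus | apply continuity_pt_mult | apply continuity_pt_pow_fun
               | apply continuity_pt_const; intros ? ?; reflexivity | assumption ].
Qed.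

Lemma lyapunov_ge k mu a x v : 0 <= a -> mu ^ 2 * x ^ 2 / 4 <= lyapunov k mu a x v.
Proof.
  intros Ha. unfold lyapunov.
  assert (0 < INR (2 * k + 2)) by (apply lt_0_INR; lia).
  assert (0 <= 2 * a * (x ^ 2) ^ (k + 1) / INR (2 * k + 2))
    by (apply Rdiv_le_0_compat; [apply Rmult_le_pos; [lra|apply pow_le, pow2_ge_0]|lra]).
  pose proof (pow2_ge_0 (2 * v + mu * x)). nra.
Qed.

Definition lyapunov_const (k : nat) (mu a R : R) :=
  (3 / 2 + mu ^ 2 + a * (R ^ 2) ^ k) ^ (k + 1) * 2 ^ (k + 1) * ((R ^ 2) ^ k + / a).

Lemma lyapunov_const_pos k mu a R : 0 < a -> 0 < lyapunov_const k mu a R.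
Proof.
  intros Ha. unfold lyapunov_const.
  assert (0 <= a * (R ^ 2) ^ k) by (apply Rmult_le_pos; [lra|apply pow_le, pow2_ge_0]).
  pose proof (pow2_ge_0 mu). pose proof (pow_le (R ^ 2) k (pow2_ge_0 R)).
  pose proof (Rinv_0_lt_compat a Ha).
  repeat apply Rmult_lt_0_compat; try apply pow_lt; lra.
Qed.

Lemma lyapunov_le_linear k mu a x v R : 0 <= a -> Rabs x <= R ->
  lyapunov k mu a x v <= (3 / 2 + mu ^ 2 + a * (R ^ 2) ^ k) * (v ^ 2 + x ^ 2).
Proof.
  intros Ha Hx. unfold lyapunov.
  destruct (sq_le_of_Rabs_le x R Hx) as [Hw0 Hw].
  pose proof (pow_succ_le_scaled (x ^ 2) (R ^ 2) k (conj Hw0 Hw)) as Hwk.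
  assert (HRk : 0 <= (R ^ 2) ^ k) by (apply pow_le; lra).
  assert (Hn : 2 <= INR (2 * k + 2)) by (apply (le_INR 2); lia).
  assert (2 * a * (x ^ 2) ^ (k + 1) / INR (2 * k + 2) <= a * ((R ^ 2) ^ k * x ^ 2)).
  { apply (Rmult_le_reg_r (INR (2 * k + 2))); [lra|].
    replace (2 * a * (x ^ 2) ^ (k + 1) / INR (2 * k + 2) * INR (2 * k + 2))
      with (2 * a * (x ^ 2) ^ (k + 1)) by (field; lra).
    pose proof (Rmult_le_compat_l a _ _ Ha Hwk).
    pose proof (Rmult_le_pos a _ Ha (pow_le _ (k + 1) Hw0)). nra. }
  assert ((v + mu * x) ^ 2 <= 2 * v ^ 2 + 2 * mu ^ 2 * x ^ 2)
    by (pose proof (pow2_ge_0 (v - mu * x)); nra).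
  pose proof (Rmult_le_pos _ _ (pow2_ge_0 mu) (pow2_ge_0 v)).
  pose proof (Rmult_le_pos _ _ (Rmult_le_pos a _ Ha HRk) (pow2_ge_0 v)).
  lra.
Qed.

Lemma lyapunov_pow_le k mu a x v R : 0 < a -> Rabs x <= R -> Rabs v <= R ->
  lyapunov k mu a x v ^ (k + 1) <= lyapunov_const k mu a R * (v ^ 2 + a * (x ^ 2) ^ (k + 1)).
Proof.
  intros Ha Hx Hv.
  pose proof (sq_le_of_Rabs_le v R Hv) as Hu. pose proof (sq_le_of_Rabs_le x R Hx) as Hw.
  set (u := v ^ 2) in *. set (w := x ^ 2) in *. set (Rk := (R ^ 2) ^ k).
  assert (HRk : 0 <= Rk) by (apply pow_le; lra).
  pose proof (pow_succ_le_scaled u (R ^ 2) k Hu) as Huk.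
  pose proof (pow_le w (k + 1) (proj1 Hw)) as Hw0.
  set (A1 := 3 / 2 + mu ^ 2 + a * Rk).
  assert (HA1 : 0 <= A1)
    by (unfold A1; pose proof (pow2_ge_0 mu); pose proof (Rmult_le_pos a Rk ltac:(lra) HRk); lra).
  assert (Hlin : 0 <= lyapunov k mu a x v <= A1 * (u + w)).
  { split; [|apply lyapunov_le_linear; lra].
    pose proof (lyapunov_ge k mu a x v ltac:(lra)) as Hg. fold w in Hg.
    pose proof (Rmult_le_pos _ _ (pow2_ge_0 mu) (proj1 Hw)). lra. }
  assert (Hsplit : u ^ (k + 1) + w ^ (k + 1) <= (Rk + / a) * (u + a * w ^ (k + 1))).
  { replace ((Rk + / a) * (u + a * w ^ (k + 1)))
      with (Rk * u + w ^ (k + 1) + (/ a * u + Rk * (a * w ^ (k + 1)))) by (field; lra).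
    pose proof (Rmult_le_pos _ _ (Rlt_le _ _ (Rinv_0_lt_compat a Ha)) (proj1 Hu)).
    pose proof (Rmult_le_pos _ _ HRk (Rmult_le_pos a _ ltac:(lra) Hw0)). fold Rk in Huk. lra. }
  unfold lyapunov_const. fold Rk A1.
  apply (Rle_trans _ (A1 ^ (k + 1) * (u + w) ^ (k + 1))).
  { rewrite <- Rpow_mult_distr. apply pow_incr. exact Hlin. }
  rewrite !Rmult_assoc. apply Rmult_le_compat_l; [apply pow_le; lra|].
  eapply Rle_trans; [apply pow_add_le_2pow; lra|].
  apply Rmult_le_compat_l; [apply pow_le; lra|exact Hsplit].
Qed.

Lemma lyapunov_nonincreasing k mu a x v s t : 0 <= mu -> 0 <= a -> 0 <= s <= t ->
  damped_solution (2 * k + 1) mu a x v ->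
  lyapunov k mu a (x t) (v t) <= lyapunov k mu a (x s) (v s).
Proof.
  intros Hmu Ha Hst [Hc Hd].
  apply (nonincreasing_of_derive_nonpos (fun s => lyapunov k mu a (x s) (v s))
    (fun s => - (mu * (v s ^ 2 + a * (x s ^ 2) ^ (k + 1)))) s t (proj2 Hst)).
  - intros r Hr. destruct (Hd r ltac:(lra)). now apply is_derive_lyapunov.
  - intros r Hr. destruct (Hc r ltac:(lra)). now apply continuity_pt_lyapunov.
  - intros r _. pose proof (pow2_ge_0 (v r)).
    pose proof (Rmult_le_pos a _ Ha (pow_le _ (k + 1) (pow2_ge_0 (x r)))).
    pose proof (Rmult_le_pos mu (v r ^ 2 + a * (x r ^ 2) ^ (k + 1)) Hmu ltac:(lra)). lra.
Qed.

(* On the bounded orbit [H' <= - (k mu / C) H ^ (k + 1)], so [H ^ (- k)] grows at least linearly. *)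
Lemma lyapunov_pow_decay k mu a x v : (1 <= k)%nat -> 0 < mu -> 0 < a ->
  damped_solution (2 * k + 1) mu a x v ->
  exists c, 0 < c /\ forall t, 0 < t -> lyapunov k mu a (x t) (v t) ^ k <= / (c * t).
Proof.
  intros Hk Hmu Ha Hsol.
  assert (Hodd : Nat.Odd (2 * k + 1)) by (now exists k).
  pose proof (damped_solution_bounded _ mu a x v Hodd ltac:(lra) Ha Hsol) as Hb.
  set (R := energy_radius (2 * k + 1) a (energy (2 * k + 1) a (x 0) (v 0))) in Hb.
  set (H := fun s => lyapunov k mu a (x s) (v s)).
  assert (HHnn : forall s, 0 <= H s).
  { intros s. pose proof (lyapunov_ge k mu a (x s) (v s) ltac:(lra)).
    pose proof (Rmult_le_pos _ _ (pow2_ge_0 mu) (pow2_ge_0 (x s))). unfold H. lra. }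
  set (C := lyapunov_const k mu a R).
  assert (HC : 0 < C) by now apply lyapunov_const_pos.
  assert (HkR : 1 <= INR k) by (apply (le_INR 1); exact Hk).
  set (c := INR k * mu / C).
  assert (Hcp : 0 < c) by (apply Rdiv_lt_0_compat; [nra|exact HC]).
  exists c. split; [exact Hcp|]. intros t Ht. change (H t ^ k <= / (c * t)).
  assert (Hct : 0 < / (c * t)) by (apply Rinv_0_lt_compat; nra).
  destruct (Req_dec (H t) 0) as [Hz|Hnz]; [rewrite Hz, pow_i by lia; lra|].
  assert (Hpos : forall s, 0 <= s <= t -> 0 < H s).
  { intros s Hs.
    pose proof (lyapunov_nonincreasing k mu a x v s t ltac:(lra) ltac:(lra) Hs Hsol) as Hle.
    change (H t <= H s) in Hle. specialize (HHnn t). lra. }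
  destruct Hsol as [Hc Hd].
  assert (Hinv : c * t <= / H t ^ k - / H 0 ^ k).
  { apply (inv_pow_growth H (fun s => mu * (v s ^ 2 + a * (x s ^ 2) ^ (k + 1))) k c t Hk);
      [lra| | | |].
    - intros s Hs. destruct (Hd s (proj1 Hs)). now apply is_derive_lyapunov.
    - intros s Hs. destruct (Hc s (proj1 Hs)). now apply continuity_pt_lyapunov.
    - exact Hpos.
    - intros s Hs. destruct (Hb s ltac:(lra)) as [Bx Bv].
      pose proof (lyapunov_pow_le k mu a (x s) (v s) R Ha Bx Bv) as HU. fold C in HU.
      replace (INR k * (mu * (v s ^ 2 + a * (x s ^ 2) ^ (k + 1))))
        with (c * (C * (v s ^ 2 + a * (x s ^ 2) ^ (k + 1)))) by (unfold c; field; lra).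
      apply Rmult_le_compat_l; [lra|exact HU]. }
  pose proof (Rinv_0_lt_compat _ (pow_lt _ k (Hpos 0 ltac:(lra)))).
  assert (HHk : 0 < H t ^ k) by (apply pow_lt, Hpos; lra).
  rewrite <- (Rinv_inv (H t ^ k)). apply Rinv_le_contravar; [nra|lra].
Qed.

Lemma damped_solution_decay k mu a x v : (1 <= k)%nat -> 0 < mu -> 0 < a ->
  damped_solution (2 * k + 1) mu a x v ->
  exists D, 0 < D /\ forall t, 0 < t -> (x t ^ 2) ^ k <= D / t.
Proof.
  intros Hk Hmu Ha Hsol.
  destruct (lyapunov_pow_decay k mu a x v Hk Hmu Ha Hsol) as [c [Hc Hdecay]].
  set (m := 4 / mu ^ 2).
  assert (Hm : 0 < m) by (apply Rdiv_lt_0_compat; [lra|apply pow_lt; lra]).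
  exists (m ^ k / c). split; [apply Rdiv_lt_0_compat; [apply pow_lt|]; lra|].
  intros t Ht.
  apply (Rle_trans _ (m ^ k * lyapunov k mu a (x t) (v t) ^ k)).
  - rewrite <- Rpow_mult_distr. apply pow_incr. split; [apply pow2_ge_0|].
    pose proof (lyapunov_ge k mu a (x t) (v t) ltac:(lra)). unfold m.
    apply (Rmult_le_reg_l (mu ^ 2 / 4)); [apply Rdiv_lt_0_compat; [apply pow_lt|]; lra|].
    replace (mu ^ 2 / 4 * (4 / mu ^ 2 * lyapunov k mu a (x t) (v t)))
      with (lyapunov k mu a (x t) (v t)) by (field; lra).
    lra.
  - replace (m ^ k / c / t) with (m ^ k * / (c * t)) by (field; lra).
    apply Rmult_le_compat_l; [apply pow_le; lra|]. now apply Hdecay.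
Qed.

(** * Solutions in the sense of [is_solution] *)

Lemma is_derive_of_deriv_nonneg (f f' : R -> R) t : deriv_nonneg f f' -> 0 < t ->
  is_derive f t (f' t).
Proof.
  intros H Ht. apply is_derive_Reals. intros eps Heps.
  destruct (H t ltac:(lra) eps Heps) as [d [Hd Hs]].
  exists (mkposreal (Rmin d t) ltac:(apply Rmin_pos; lra)). simpl.
  intros h Hh0 Hh.
  pose proof (Rmin_l d t). pose proof (Rmin_r d t).
  specialize (Hs (t + h)). replace (t + h - t) with h in Hs by ring.
  apply Hs.
  - apply Rabs_def2 in Hh. lra.
  - intros E. apply Hh0. lra.
  - lra.
Qed.

Lemma cont_nonneg_of_deriv_nonneg (f f' : R -> R) : deriv_nonneg f f' -> cont_nonneg f.
Proof.
  intros H t Ht eps Heps.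
  destruct (H t Ht 1 ltac:(lra)) as [d [Hd Hs]].
  set (c := Rabs (f' t) + 1). assert (Hc : 0 < c) by (unfold c; pose proof (Rabs_pos (f' t)); lra).
  exists (Rmin d (eps / c)). split; [apply Rmin_pos; auto; apply Rdiv_lt_0_compat; auto|].
  intros s Hs0 Hst.
  pose proof (Rmin_l d (eps / c)). pose proof (Rmin_r d (eps / c)).
  destruct (Req_dec s t) as [->|Hne]; [rewrite Rminus_diag, Rabs_R0; auto|].
  specialize (Hs s Hs0 Hne ltac:(lra)).
  assert (Hq : Rabs ((f s - f t) / (s - t)) < c).
  { unfold c. pose proof (Rabs_triang_inv ((f s - f t) / (s - t)) (f' t)). lra. }
  replace (f s - f t) with ((f s - f t) / (s - t) * (s - t)) by (field; lra).
  rewrite Rabs_mult.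
  assert (0 < Rabs (s - t)) by (apply Rabs_pos_lt; lra).
  apply (Rle_lt_trans _ (c * Rabs (s - t))); [apply Rmult_le_compat_r; lra|].
  replace eps with (c * (eps / c)) by (field; lra). apply Rmult_lt_compat_l; lra.
Qed.

Lemma continuity_pt_Rmax0 (f : R -> R) s : cont_nonneg f -> continuity_pt (fun r => f (Rmax 0 r)) s.
Proof.
  intros H eps Heps.
  destruct (H (Rmax 0 s) (Rmax_l 0 s) eps Heps) as [d [Hd Hs]].
  exists d. split; [exact Hd|]. intros r [_ Hr]. simpl in *. unfold R_dist in *.
  apply Hs; [apply Rmax_l|]. eapply Rle_lt_trans; [|exact Hr].
  unfold Rmax; repeat destruct Rle_dec; unfold Rabs; repeat destruct Rcase_abs; lra.
Qed.

Lemma is_derive_Rmax0 (f : R -> R) t l : 0 < t -> is_derive f t l ->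
  is_derive (fun r => f (Rmax 0 r)) t l.
Proof.
  intros Ht H. apply (is_derive_ext_loc f); [|exact H].
  exists (mkposreal t Ht). intros r Hr. cbv [ball] in Hr. simpl in Hr.
  unfold AbsRing_ball, abs, minus, plus, opp in Hr. simpl in Hr.
  apply Rabs_def2 in Hr. rewrite Rmax_right by lra. reflexivity.
Qed.

Lemma deriv_nonneg_of_is_derive (f f' : R -> R) :
  (forall t, 0 <= t -> is_derive f t (f' t)) -> deriv_nonneg f f'.
Proof.
  intros H t Ht eps Heps. specialize (H t Ht). apply is_derive_Reals in H.
  destruct (H eps Heps) as [d Hd]. exists d. split; [apply cond_pos|].
  intros s Hs Hst Hsd. specialize (Hd (s - t) ltac:(lra) Hsd).
  now replace (t + (s - t)) with s in Hd by ring.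
Qed.

Lemma cont_nonneg_of_continuity_pt (g : R -> R) :
  (forall t, 0 <= t -> continuity_pt g t) -> cont_nonneg g.
Proof.
  intros H t Ht eps Heps. destruct (continuity_pt_eps g t eps (H t Ht) Heps) as [d [Hd Hg]].
  exists d. split; [exact Hd|]. intros s _. apply Hg.
Qed.

(* A solution in the sense of [is_solution] is only one-sided differentiable at [0];
   composing with [Rmax 0] makes it continuous on all of [R]. *)
Lemma damped_solution_of_is_solution p mu a x0 x1 y : is_solution p mu a x0 x1 y ->
  exists w, damped_solution p mu a (fun t => y (Rmax 0 t)) w /\ y 0 = x0 /\ w 0 = x1.
Proof.
  intros [dy [ddy [Hy [Hdy [Hc [Heq [Hy0 Hdy0]]]]]]].
  exists (fun t => dy (Rmax 0 t)). split; [split|].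
  - intros t _. split; apply continuity_pt_Rmax0; eapply cont_nonneg_of_deriv_nonneg; eassumption.
  - intros t Ht. rewrite (Rmax_right 0 t) by lra. split; apply is_derive_Rmax0; auto.
    + now apply is_derive_of_deriv_nonneg.
    + unfold damping_force.
      replace (- mu * dy t - a * y t ^ p) with (ddy t) by (specialize (Heq t Ht); lra).
      now apply is_derive_of_deriv_nonneg.
  - rewrite Rmax_left by lra. now split.
Qed.

Lemma is_solution_of_ode_solution p mu a x0 x1 x v :
  ode_solution (fun _ v => v) (damping_force p mu a) x v -> x 0 = x0 -> v 0 = x1 ->
  is_solution p mu a x0 x1 x.
Proof.
  intros H Hx0 Hv0. exists v, (fun s => damping_force p mu a (x s) (v s)).
  split; [|split; [|split; [|split; [|split]]]].
  - apply deriv_nonneg_of_is_derive. intros t Ht. apply H, Ht.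
  - apply deriv_nonneg_of_is_derive. intros t Ht. apply H, Ht.
  - apply cont_nonneg_of_continuity_pt. intros t Ht. destruct (H t Ht) as [Dx Dv].
    unfold damping_force. apply continuity_pt_minus.
    + apply continuity_pt_scal. exact (continuity_pt_of_is_derive _ _ _ Dv).
    + apply continuity_pt_scal, continuity_pt_pow_fun. exact (continuity_pt_of_is_derive _ _ _ Dx).
  - intros t _. unfold damping_force. ring.
  - exact Hx0.
  - exact Hv0.
Qed.

Theorem theorem1 (p : nat) (mu alpha : R)
  (hp : (3 <= p)%nat) (hodd : Nat.Odd p) (hmu : 0 <= mu) (halpha : 0 < alpha)
  (x0 x1 : R) :
  exists x : R -> R,
    is_solution p mu alpha x0 x1 x /\
    (forall y : R -> R, is_solution p mu alpha x0 x1 y ->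
       forall t, 0 <= t -> y t = x t) /\
    (0 < mu -> exists Cstar, 0 < Cstar /\
       forall t, 0 < t -> Rabs (x t) <= Cstar * Rpower t (- (1 / (INR p - 1)))).
Proof.
  destruct (damped_solution_exists p mu alpha x0 x1 hodd hmu halpha) as [x [v [Hx0 [Hv0 Hode]]]].
  pose proof (damped_solution_of_ode_solution _ _ _ _ _ Hode) as Hsol.
  exists x. split; [|split].
  - exact (is_solution_of_ode_solution _ _ _ _ _ _ _ Hode Hx0 Hv0).
  - intros y Hy t Ht.
    destruct (damped_solution_of_is_solution _ _ _ _ _ _ Hy) as [w [Hyw [Hy0 Hw0]]].
    replace (y t) with (y (Rmax 0 t)) by (now rewrite Rmax_right).
    apply (damped_solution_unique p mu alpha _ w x v hodd hmu halpha Hyw Hsol); auto;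
      cbv beta; rewrite ?Rmax_left by lra; congruence.
  - intros Hmu. destruct hodd as [k ->].
    destruct (damped_solution_decay k mu alpha x v ltac:(lia) Hmu halpha Hsol) as [D [HD Hdecay]].
    exists (Rpower D (1 / (2 * INR k))). split; [apply exp_pos|].
    replace (INR (2 * k + 1) - 1) with (2 * INR k) by (rewrite plus_INR, mult_INR; simpl; ring).
    intros t Ht. apply Rabs_le_Rpower_of_pow_le; auto. lia.
Qed.
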